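(* Let $m>1$ be odd, $a=\frac{m+1}2$, $\bar i=m+1-i$ for $i\in[m]$, and $\kappa=\frac{m^2-1}2$. A set $S\subseteq O_m$ is valid if and only if all of the following hold: (1) $\{(i,j)\in O_m:(i<j\text{ and }i<\bar j)\text{ or }(i>j\text{ and }i>\bar j)\}\subseteq S$; (2) $\{(i,j)\in O_m:(i>j\text{ and }i<\bar j)\text{ or }(i<j\text{ and }i>\bar j)\}\cap S=\emptyset$; (3) for each $1\le i\le\frac{m-1}2$ exactly one of the following holds: (a) $\{(i,i),(\bar i,\bar i)\}\subseteq S$ and $\{(i,\bar i),(\bar i,i)\}\cap S=\emptyset$; (b) $\{(i,\bar i),(\bar i,i)\}\subseteq S$ and $\{(i,i),(\bar i,\bar i)\}\cap S=\emptyset$. In particular there are exactly $2^{(m-1)/2}$ valid sets.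
   Context: $O_m=([m]\times[m])\setminus\{(a,a)\}$. Let $\tau:O_m\to O_m$, $\tau(i,j)=(j,\bar i)$, extended to subsets elementwise, and $\iota(S)=O_m\setminus S$ for $S\subseteq O_m$. A subset $S\subseteq O_m$ is valid if (i) $|S|=\kappa$, (ii) $\tau(S)=\iota(S)$, and (iii) for every $i\in[m]$, $|\{j:(i,j)\in S\}|=|i-\bar i|$. *)

(* Indices of [m] = {1,...,m} are encoded 0-based as 'I_m:
   the ordinal k stands for k+1. Then  bar i = m+1-i  becomes  rev_ord i
   (value m-1-k), the centre a=(m+1)/2 becomes the ordinal of value (m-1)/2,
   and order/distances are preserved by the shift. *)
From mathcomp Require Import all_boot.
Set Implicit Arguments. Unset Strict Implicit. Unset Printing Implicit Defensive.

Definition natdist (x y : nat) : nat := (x - y) + (y - x).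

Section Defs.
Variable m : nat.

Definition bar (i : 'I_m) : 'I_m := rev_ord i.

Definition centre : nat := (m - 1)./2.

Definition Om : {set 'I_m * 'I_m} :=
  [set p | ~~ ((val p.1 == centre) && (val p.2 == centre))].

Definition tau (p : 'I_m * 'I_m) : 'I_m * 'I_m := (p.2, bar p.1).

Definition kappa : nat := (m ^ 2 - 1)./2.

Definition valid (S : {set 'I_m * 'I_m}) : bool :=
  [&& S \subset Om,
      #|S| == kappa,
      tau @: S == Om :\: S &
      [forall i : 'I_m, #|[set j : 'I_m | (i, j) \in S]| == natdist i (bar i)]].

Definition cond1 (S : {set 'I_m * 'I_m}) : bool :=
  [set p in Om | ((p.1 < p.2) && (p.1 < bar p.2)) || ((p.1 > p.2) && (p.1 > bar p.2))]
    \subset S.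

Definition cond2 (S : {set 'I_m * 'I_m}) : bool :=
  [set p in Om | ((p.1 > p.2) && (p.1 < bar p.2)) || ((p.1 < p.2) && (p.1 > bar p.2))]
    :&: S == set0.

Definition cond3a (S : {set 'I_m * 'I_m}) (i : 'I_m) : bool :=
  ([set (i, i); (bar i, bar i)] \subset S) && ([set (i, bar i); (bar i, i)] :&: S == set0).

Definition cond3b (S : {set 'I_m * 'I_m}) (i : 'I_m) : bool :=
  ([set (i, bar i); (bar i, i)] \subset S) && ([set (i, i); (bar i, bar i)] :&: S == set0).

(* for 1 <= i <= (m-1)/2 (i.e. 0-based i < (m-1)/2) exactly one of (a),(b) *)
Definition cond3 (S : {set 'I_m * 'I_m}) : Prop :=
  forall i : 'I_m, i < (m - 1)./2 -> xorb (cond3a S i) (cond3b S i).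

End Defs.

(* Indices are 0-based, m = 2c+1, and the depth of an index i is its distance
   min(i, m-1-i) to the boundary of the grid; bar preserves depth, and
   tau(i,j) = (j, bar i) exchanges the depths of the row and of the column.
   For a choice Q : 'I_m -> bool with Q (bar i) = Q i, the standard set
   std_set Q consists of the pairs of O_m whose row is strictly shallower than
   their column, plus, in each corner block {i, bar i}^2, the two diagonal
   pairs if Q i holds and the two antidiagonal ones otherwise.
   1. Every standard set is valid: tau exchanges it with its complement in
      O_m (so it has kappa elements) and its rows have the prescribed sizes.
   2. Conditions (1)-(3) say exactly that S is the standard set of its
      diagonal; conditions (1) and (2) are "row shallower / deeper than column".
   3. A valid S is standard.  Weight each pair by m - depth(row): the row sizes
      force S to have the same total weight as the reference standard set S0;
      mapping p in S to whichever of p, tau p lies in S0 is a bijection onto S0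
      that never decreases the weight, so it preserves it, which forbids pairs
      of S whose row is deeper than their column.  Tau-complementarity then
      determines everything else.
   4. Standard sets correspond bijectively to subsets of {i | i < c}. *)
From mathcomp Require Import all_boot zify.
Set Implicit Arguments. Unset Strict Implicit. Unset Printing Implicit Defensive.

Lemma card_ord_range n a b : b <= n -> #|[set j : 'I_n | a <= j < b]| = b - a.
Proof.
move=> le_bn; case: (leqP a b) => [le_ab | lt_ba]; last first.
  rewrite (_ : b - a = 0); last by lia.
  by apply/eqP; rewrite cards_eq0; apply/eqP/setP => j; rewrite !inE; lia.
rewrite cardsE cardE /enum_mem size_filter -enumT -(count_map val (fun j => a <= j < b)).
have -> : map val (enum 'I_n) = iota 0 a ++ iota a (b - a) ++ iota b (n - b).
  rewrite val_enum_ord -{2}(subnKC le_ab) -iotaD -(add0n a) -iotaD.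
  by congr iota; lia.
rewrite !count_cat (@eq_in_count _ _ pred0 (iota 0 a)) ?count_pred0;
  last by move=> j; rewrite mem_iota /=; lia.
rewrite (@eq_in_count _ _ pred0 (iota b _)) ?count_pred0;
  last by move=> j; rewrite mem_iota /=; lia.
rewrite (@eq_in_count _ _ predT) ?count_predT ?size_iota;
  last by move=> j; rewrite mem_iota /=; lia.
lia.
Qed.

Lemma setI2_eq0 (T : finType) (a b : T) (S : {set T}) :
  ([set a; b] :&: S == set0) = (a \notin S) && (b \notin S).
Proof. by rewrite setIUl setU_eq0 !setI_eq0 !disjoints1. Qed.

Section HalfSets.
Variables (T : finType) (f : T -> T) (O : {set T}).
Hypotheses (f_inj : injective f) (f_O : forall p, (f p \in O) = (p \in O)).

Lemma imset_complP (S : {set T}) : S \subset O ->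
  reflect (forall p, p \in O -> (f p \in S) = (p \notin S)) (f @: S == O :\: S).
Proof.
move=> sub; apply: (iffP eqP) => [fS p pO | hS].
  have fpO : f p \in O by rewrite f_O.
  by rewrite -[in RHS](mem_imset _ _ f_inj) fS !inE fpO andbT negbK.
apply/setP => q; rewrite inE; apply/imsetP/andP => [[p pS ->] | [qnS qO]].
  have pO := subsetP sub p pS.
  by rewrite hS // f_O pO pS.
have [g fK gK] := injF_bij f_inj.
have gqO : g q \in O by rewrite -f_O gK.
by exists (g q); rewrite ?gK //; apply/negPn; rewrite -hS // gK.
Qed.

Lemma card_imset_compl (S : {set T}) : S \subset O -> f @: S = O :\: S -> #|S|.*2 = #|O|.
Proof.
move=> sub fS; have := card_imset S f_inj; rewrite fS cardsD (setIidPr sub).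
by have := subset_leq_card sub; lia.
Qed.
End HalfSets.

Lemma sum_rows (I J : finType) (S : {set I * J}) (w : I -> nat) :
  \sum_(p in S) w p.1 = \sum_i w i * #|[set j | (i, j) \in S]|.
Proof.
rewrite big_mkcond (eq_bigr (fun p => if (p.1, p.2) \in S then w p.1 else 0)); last by case.
rewrite -(pair_bigA _ (fun i j => if (i, j) \in S then w i else 0)) /=.
by apply: eq_bigr => i _; rewrite -big_mkcond sum_nat_const cardsE mulnC.
Qed.

Lemma leq_sum_imset_eq (T : finType) (S S' : {set T}) (g : T -> T) (w : T -> nat) :
  {in S &, injective g} -> g @: S = S' -> (forall p, p \in S -> w p <= w (g p)) ->
  \sum_(p in S) w p = \sum_(p in S') w p -> forall p, p \in S -> w p = w (g p).
Proof.
move=> g_inj gS le_w eq_sum p pS.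
have le_if q : q \in S -> w q <= w (g q) ?= iff (w q == w (g q)) by move/le_w.
have := (leqif_sum le_if).2; rewrite eq_sum -gS (big_imset _ g_inj) eqxx.
by move/esym/forall_inP/(_ p pS)/eqP.
Qed.

Section OddGrid.
Variable m : nat.
Hypothesis m_odd : odd m.
Local Notation c := (centre m).

Lemma m_eq : m = c.*2.+1.
Proof. by have := odd_double_half m; rewrite m_odd /centre /=; lia. Qed.

Definition depth (i : 'I_m) : nat := minn i (m - i.+1).

Lemma eq_ord (i j : 'I_m) : (i == j) = (val i == val j). Proof. by []. Qed.
Lemma bar_val (i : 'I_m) : val (bar i) = m - i.+1. Proof. by []. Qed.
Lemma barK (i : 'I_m) : bar (bar i) = i. Proof. exact: rev_ordK. Qed.

Ltac grid_lia :=
  have := m_eq; rewrite ?eq_ord ?bar_val /depth /=;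
  repeat match goal with x : _ |- _ =>
    lazymatch goal with
    | _ : is_true (nat_of_ord x < m) |- _ => fail
    | _ => have := ltn_ord x; move=> ?
    end end;
  lia.

Lemma depth_bar (i : 'I_m) : depth (bar i) = depth i. Proof. grid_lia. Qed.

Lemma depth_eq (i j : 'I_m) : depth i = depth j -> j = i \/ j = bar i.
Proof.
move=> e; have : (val j == val i) || (val j == m - i.+1) by move: e; grid_lia.
by case/orP => /eqP e'; [left | right]; apply: val_inj.
Qed.

Lemma mem_Om (i j : 'I_m) : ((i, j) \in Om m) = ~~ ((val i == c) && (val j == c)).
Proof. by rewrite inE. Qed.

Lemma Om_noncentre (i j : 'I_m) : val i != c -> (i, j) \in Om m.
Proof. by rewrite mem_Om => /negbTE ->. Qed.

Lemma Om_corner (i j : 'I_m) : (i, j) \in Om m -> depth i = depth j -> val i != c.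
Proof. by rewrite mem_Om => pO e; move: pO e; grid_lia. Qed.

Lemma card_Om : #|Om m| = m * m - 1.
Proof.
have c_lt_m : c < m by have := m_eq; lia.
have -> : Om m = [set~ (Ordinal c_lt_m, Ordinal c_lt_m)].
  by apply/setP => -[i j]; rewrite mem_Om !inE xpair_eqE.
by rewrite cardsC1 card_prod card_ord subn1.
Qed.

Lemma tau_inj : injective (@tau m).
Proof. by move=> [i j] [i' j'] [-> e]; congr pair; apply: val_inj; move: e; grid_lia. Qed.

Lemma tau_Om (p : 'I_m * 'I_m) : (tau p \in Om m) = (p \in Om m).
Proof. by case: p => i j; rewrite /tau /= !mem_Om; apply/idP/idP; grid_lia. Qed.

Lemma card_tau_half (S : {set 'I_m * 'I_m}) :
  S \subset Om m -> @tau m @: S = Om m :\: S -> #|S| = kappa m.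
Proof.
move=> sub tauS; have := card_imset_compl tau_inj sub tauS.
by rewrite card_Om /kappa expnS expn1 => <-; rewrite doubleK.
Qed.

(* Choices of diagonal (true) or antidiagonal (false) on the corner blocks. *)
Definition sym_choice (Q : 'I_m -> bool) : Prop := forall i, Q (bar i) = Q i.

Definition std_pred (Q : 'I_m -> bool) (p : 'I_m * 'I_m) : bool :=
  (depth p.1 < depth p.2) || ((depth p.1 == depth p.2) && ((p.1 == p.2) == Q p.1)).

Definition std_set (Q : 'I_m -> bool) : {set 'I_m * 'I_m} := [set p in Om m | std_pred Q p].

Lemma mem_std (Q : 'I_m -> bool) (p : 'I_m * 'I_m) :
  (p \in std_set Q) = (p \in Om m) && std_pred Q p.
Proof. by rewrite inE. Qed.

Lemma std_sub (Q : 'I_m -> bool) : std_set Q \subset Om m.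
Proof. by apply/subsetP => p; rewrite mem_std => /andP[]. Qed.

Lemma eq_std (Q Q' : 'I_m -> bool) : Q =1 Q' -> std_set Q = std_set Q'.
Proof. by move=> eQ; apply/setP => p; rewrite !mem_std /std_pred eQ. Qed.

Lemma mem_std_corner (Q : 'I_m -> bool) (i j : 'I_m) :
  (i, j) \in Om m -> depth i = depth j -> ((i, j) \in std_set Q) = ((i == j) == Q i).
Proof. by move=> pO e; rewrite mem_std pO /std_pred /= e ltnn eqxx. Qed.

Lemma mem_std_diag (Q : 'I_m -> bool) (i : 'I_m) :
  val i != c -> ((i, i) \in std_set Q) = Q i.
Proof. by move=> ic; rewrite mem_std_corner ?eqxx ?Om_noncentre. Qed.

Lemma mem_std_anti (Q : 'I_m -> bool) (i : 'I_m) :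
  val i != c -> ((i, bar i) \in std_set Q) = ~~ Q i.
Proof.
move=> ic; rewrite mem_std_corner ?Om_noncentre ?depth_bar //.
by have -> : (i == bar i) = false by move: ic; grid_lia.
Qed.

Lemma std_tau (Q : 'I_m -> bool) : sym_choice Q ->
  forall p, p \in Om m -> (tau p \in std_set Q) = (p \notin std_set Q).
Proof.
move=> symQ [i j] pO; rewrite !mem_std tau_Om pO /std_pred /tau /= depth_bar.
case: (ltngtP (depth i) (depth j)) => //= e.
have ic := Om_corner pO e.
have i_bar : (i == bar i) = false by move: ic; grid_lia.
by case: (depth_eq e) => ->; rewrite ?barK ?symQ eqxx ?i_bar; case: (Q i).
Qed.

(* Row i of a standard set is the interval of columns deeper than or as deep
   as i, minus one corner entry: it has 2 (c - depth i) = |i - bar i| elements. *)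
Lemma std_row (Q : 'I_m -> bool) (i : 'I_m) :
  #|[set j | (i, j) \in std_set Q]| = natdist i (bar i).
Proof.
have [ic | ic] := eqVneq (val i) c.
  have -> : [set j | (i, j) \in std_set Q] = set0.
    apply/setP => j; rewrite in_set in_set0 mem_std mem_Om /std_pred /=.
    by apply/negbTE; move: ic; grid_lia.
  by rewrite cards0 /natdist bar_val; move: ic; grid_lia.
pose o := if Q i then bar i else i.
have -> : [set j | (i, j) \in std_set Q] = [set j : 'I_m | depth i <= j < m - depth i] :\ o.
  apply/setP => j; rewrite in_set mem_std Om_noncentre // !inE /std_pred /o /=.
  by case: (Q i); move: ic; grid_lia.
have := cardsD1 o [set j : 'I_m | depth i <= j < m - depth i].
rewrite card_ord_range; last by grid_lia.
rewrite inE (_ : depth i <= o < m - depth i); last by rewrite /o; case: (Q i); grid_lia.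
by rewrite /natdist bar_val; move: ic; grid_lia.
Qed.

Lemma std_valid (Q : 'I_m -> bool) : sym_choice Q -> valid (std_set Q).
Proof.
move=> symQ.
have tauS : @tau m @: std_set Q = Om m :\: std_set Q.
  by apply/eqP/(imset_complP tau_inj tau_Om (std_sub Q)); exact: std_tau.
apply/and4P; split; first exact: std_sub.
- by rewrite (card_tau_half (std_sub Q) tauS).
- by rewrite tauS.
- by apply/forallP => i; rewrite std_row.
Qed.

Definition diag (S : {set 'I_m * 'I_m}) (i : 'I_m) : bool := (i, i) \in S.

Lemma std_profile (S : {set 'I_m * 'I_m}) : S \subset Om m ->
  (forall p, p \in Om m -> depth p.1 < depth p.2 -> p \in S) ->
  (forall p, p \in Om m -> depth p.2 < depth p.1 -> p \notin S) ->
  (forall i, val i != c -> diag S (bar i) = diag S i /\ ((i, bar i) \in S) = ~~ diag S i) ->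
  sym_choice (diag S) /\ S = std_set (diag S).
Proof.
move=> sub lt_in gt_out corner.
have symS : sym_choice (diag S).
  move=> i; have [ic | ic] := eqVneq (val i) c; last by case: (corner i ic).
  by have -> : bar i = i by apply: val_inj; move: ic; grid_lia.
split => //; apply/setP => -[i j]; rewrite mem_std.
have [pO | pnO] := boolP ((i, j) \in Om m); last first.
  by apply/negbTE; apply: contra pnO; apply: (subsetP sub).
rewrite /std_pred /=; case: (ltngtP (depth i) (depth j)) => e /=.
- exact: lt_in.
- exact/negbTE/gt_out.
- have ic := Om_corner pO e.
  case: (depth_eq e) => ->; first by rewrite eqxx /diag; case: ((i, i) \in S).
  have [_ ->] := corner i ic.
  by have -> : (i == bar i) = false by move: ic; grid_lia.
Qed.

Lemma cond1_regionE (i j : 'I_m) :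
  ((i < j) && (i < bar j)) || ((i > j) && (i > bar j)) = (depth i < depth j).
Proof. by apply/idP/idP; grid_lia. Qed.

Lemma cond2_regionE (i j : 'I_m) :
  ((i > j) && (i < bar j)) || ((i < j) && (i > bar j)) = (depth j < depth i).
Proof. by apply/idP/idP; grid_lia. Qed.

Lemma cond1P (S : {set 'I_m * 'I_m}) :
  reflect (forall p, p \in Om m -> depth p.1 < depth p.2 -> p \in S) (cond1 S).
Proof.
apply: (iffP subsetP) => [sub p pO lt | h p].
  by apply: sub; rewrite in_set pO cond1_regionE.
by rewrite in_set cond1_regionE => /andP[]; exact: h p.
Qed.

Lemma cond2P (S : {set 'I_m * 'I_m}) :
  reflect (forall p, p \in Om m -> depth p.2 < depth p.1 -> p \notin S) (cond2 S).
Proof.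
rewrite /cond2 setI_eq0 disjoints_subset.
apply: (iffP subsetP) => [sub p pO lt | h p].
  by have := sub p; rewrite in_set pO cond2_regionE in_setC; apply.
by rewrite in_set cond2_regionE in_setC => /andP[]; exact: h p.
Qed.

Lemma cond3_cornerE (S : {set 'I_m * 'I_m}) (i : 'I_m) :
  xorb (cond3a S i) (cond3b S i) =
  [&& diag S (bar i) == diag S i, ((i, bar i) \in S) == ~~ diag S i
    & ((bar i, i) \in S) == ~~ diag S i].
Proof.
rewrite /cond3a /cond3b /diag !subUset !sub1set !setI2_eq0.
by case: ((i, i) \in S); case: ((bar i, bar i) \in S); case: ((i, bar i) \in S);
  case: ((bar i, i) \in S).
Qed.

Lemma cond3_noncentre (S : {set 'I_m * 'I_m}) : cond3 S ->
  forall i, val i != c -> diag S (bar i) = diag S i /\ ((i, bar i) \in S) = ~~ diag S i.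
Proof.
move=> h3 i ic.
have low (k : 'I_m) : k < c -> [&& diag S (bar k) == diag S k,
    ((k, bar k) \in S) == ~~ diag S k & ((bar k, k) \in S) == ~~ diag S k].
  by move=> lt_kc; rewrite -cond3_cornerE; exact: h3.
case: (ltnP i c) => [/low/and3P[/eqP -> /eqP -> _] // | le_ci].
have /low/and3P[/eqP e1 _ /eqP e3] : bar i < c by move: ic le_ci; grid_lia.
by rewrite barK in e1 e3; rewrite e3 -e1.
Qed.

Lemma std_conds (Q : 'I_m -> bool) : sym_choice Q ->
  [/\ cond1 (std_set Q), cond2 (std_set Q) & cond3 (std_set Q)].
Proof.
move=> symQ; split.
- by apply/cond1P => p pO lt; rewrite mem_std pO /std_pred lt.
- apply/cond2P => p pO lt; rewrite mem_std pO /std_pred negb_or.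
  by rewrite ltnNge (ltnW lt) gtn_eqF.
- move=> i lt_ic; rewrite cond3_cornerE /diag.
  have ic : val i != c by move: lt_ic; grid_lia.
  have bic : val (bar i) != c by move: lt_ic; grid_lia.
  rewrite !mem_std_diag // mem_std_anti //; have := mem_std_anti Q bic.
  by rewrite barK => ->; rewrite symQ !eqxx.
Qed.

Lemma conds_std (S : {set 'I_m * 'I_m}) : S \subset Om m ->
  [/\ cond1 S, cond2 S & cond3 S] -> sym_choice (diag S) /\ S = std_set (diag S).
Proof.
move=> sub [/cond1P lt_in /cond2P gt_out /cond3_noncentre corner].
exact: std_profile.
Qed.

Lemma valid_tau (S : {set 'I_m * 'I_m}) : valid S ->
  forall p, p \in Om m -> (tau p \in S) = (p \notin S).
Proof. by case/and4P => sub _ /(imset_complP tau_inj tau_Om sub). Qed.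

(* The weight argument: no pair of a valid set has its row deeper than its column.
   The reference set S0 takes the shallower-row pair in every tau-orbit. *)
Lemma valid_depth_le (S : {set 'I_m * 'I_m}) : valid S ->
  forall p, p \in S -> depth p.1 <= depth p.2.
Proof.
move=> vS; have /and4P[sub /eqP cardS _ /forallP rowS] := vS.
pose S0 := std_set (fun=> false).
have vS0 : valid S0 by apply: std_valid.
have /and4P[_ /eqP cardS0 _ _] := vS0.
pose sg q := if q \in S0 then q else tau q.
have tau_out r : r \in S -> tau r \notin S.
  by move=> rS; rewrite valid_tau ?rS ?(subsetP sub).
have sg_inj : {in S &, injective sg}.
  move=> p q pS qS; rewrite /sg.
  case: ifP => _; case: ifP => _ e; [by [] | | | exact: tau_inj].
  - by move: (tau_out q qS); rewrite -e pS.
  - by move: (tau_out p pS); rewrite e qS.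
have sg_img : sg @: S = S0.
  apply/eqP; rewrite eqEcard card_in_imset // cardS cardS0 leqnn andbT.
  apply/subsetP => _ /imsetP[q qS ->]; rewrite /sg; case: ifP => // /negbT.
  by rewrite -(valid_tau vS0) ?(subsetP sub).
pose w (i : 'I_m) := m - depth i.
have le_w q : q \in S -> w q.1 <= w (sg q).1.
  move=> qS; rewrite /sg; case: ifP => // /negbT; rewrite mem_std (subsetP sub) //.
  by rewrite /std_pred /w /=; grid_lia.
have eq_sum : \sum_(q in S) w q.1 = \sum_(q in S0) w q.1.
  by rewrite !sum_rows; apply: eq_bigr => i _; rewrite (eqP (rowS i)) std_row.
move=> p pS; have := leq_sum_imset_eq (w := fun q => w q.1) sg_inj sg_img le_w eq_sum pS.
rewrite /w /sg; case: ifP => [| _ /=]; last by grid_lia.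
by rewrite mem_std => /andP[_]; rewrite /std_pred; grid_lia.
Qed.

Lemma valid_std (S : {set 'I_m * 'I_m}) : valid S ->
  sym_choice (diag S) /\ S = std_set (diag S).
Proof.
move=> vS; have /and4P[sub _ _ _] := vS.
have tauS := valid_tau vS; have le_S := valid_depth_le vS.
apply: std_profile => // [p pO lt | p pO lt | i ic].
- rewrite -[p \in S]negbK -tauS //; apply/negP => /le_S.
  by case: p pO lt => i j _; rewrite /tau /= depth_bar; grid_lia.
- by apply/negP => /le_S; rewrite leqNgt lt.
- have iO : (i, i) \in Om m by exact: Om_noncentre.
  have ibO : (i, bar i) \in Om m by exact: Om_noncentre.
  have e1 := tauS _ iO; have e2 := tauS _ ibO.
  rewrite /tau /= in e1 e2; rewrite /diag e1 in e2 *.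
  by rewrite e2 negbK.
Qed.

Definition lower_half : {set 'I_m} := [set i : 'I_m | i < c].

Definition lift_choice (A : {set 'I_m}) (i : 'I_m) : bool := (i \in A) || (bar i \in A).

Lemma lift_choice_sym (A : {set 'I_m}) : sym_choice (lift_choice A).
Proof. by move=> i; rewrite /lift_choice barK orbC. Qed.

Lemma lift_choice_low (A : {set 'I_m}) (i : 'I_m) : A \subset lower_half -> i < c ->
  lift_choice A i = (i \in A).
Proof.
move=> AL lt_ic; rewrite /lift_choice; case: (boolP (bar i \in A)) => [/(subsetP AL) | _].
  by rewrite inE; move: lt_ic; grid_lia.
by rewrite orbF.
Qed.

Lemma valid_lift (S : {set 'I_m * 'I_m}) : valid S ->
  S = std_set (lift_choice [set i in lower_half | diag S i]).
Proof.
move=> vS; have [symS {1}->] := valid_std vS; have /and4P[sub _ _ _] := vS.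
apply: eq_std => i; rewrite /lift_choice !inE.
case: (ltngtP i c) => [lt_ic | gt_ic | ic].
- have -> : (bar i < c) = false by move: lt_ic; grid_lia.
  by rewrite orbF.
- have -> : bar i < c by move: gt_ic; grid_lia.
  by rewrite symS.
- have -> : bar i = i by apply: val_inj; move: ic; grid_lia.
  have -> : diag S i = false.
    by apply/negbTE/negP => /(subsetP sub); rewrite mem_Om /=; move: ic; grid_lia.
  by rewrite !andbF.
Qed.

Lemma card_valid : #|[set S : {set 'I_m * 'I_m} | valid S]| = 2 ^ c.
Proof.
pose F (A : {set 'I_m}) := std_set (lift_choice A).
have F_inj : {in powerset lower_half &, injective F}.
  move=> A B; rewrite !powersetE /F => AL BL eF; apply/setP => i.
  case: (ltnP i c) => [lt_ic | le_ci].
    have ic : val i != c by move: lt_ic; grid_lia.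
    by rewrite -(lift_choice_low AL) // -(lift_choice_low BL) // -!(mem_std_diag _ ic) eF.
  have out (X : {set 'I_m}) : X \subset lower_half -> i \notin X.
    by move=> XL; apply: contraL le_ci => /(subsetP XL); rewrite inE -ltnNge.
  by rewrite (negbTE (out A AL)) (negbTE (out B BL)).
have F_img : F @: powerset lower_half = [set S | valid S].
  apply/setP => S; rewrite inE; apply/imsetP/idP => [[A _ ->] | vS].
    exact/std_valid/lift_choice_sym.
  exists [set i in lower_half | diag S i]; last exact: valid_lift.
  by rewrite powersetE; apply/subsetP => i; rewrite inE => /andP[].
have card_low : #|lower_half| = c by rewrite (card_ord_range 0) ?subn0 //; grid_lia.
by rewrite -F_img (card_in_imset F_inj) card_powerset card_low.
Qed.

End OddGrid.

Theorem lemma6p6 (m : nat) (hodd : odd m) (hm : 1 < m) :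
  (forall S : {set 'I_m * 'I_m}, S \subset Om m ->
     (valid S <-> [/\ cond1 S, cond2 S & cond3 S])) /\
  #|[set S : {set 'I_m * 'I_m} | valid S]| = 2 ^ ((m - 1)./2).
Proof.
split; last exact: card_valid hodd.
move=> S sub; split => [vS | conds].
- by have [symS ->] := valid_std hodd vS; apply: std_conds.
- by have [symS ->] := conds_std hodd sub conds; apply: std_valid.
Qed.
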